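(* Let $x\in\mathbb{R}^n$. If $G_i^-(x)=G_i^+(x)$ for any $i\in I$, then $G_{\min}^+(x)=G_{\min}^-(x)$. If the equidistant sets belonging to the focal sets $K$ and $L_i$ are equidistant functions for any $i\in I$, then so is the equidistant set belonging to the focal sets $K$ and $L$.
   Context: For sets $A,B\subset\mathbb{R}^{n+1}$ and a point $p$, $d(p,A)=\inf\{|p-a| : a\in A\}$, and the equidistant set is $\{A=B\}=\{p : d(p,A)=d(p,B)\}$. Let $I$ be a finite, nonempty index set and $\{f_i\mid i\in I\}$ a family of positive-valued, continuous functions on $\mathbb{R}^n$, with epigraphs $L_i=\{(x,y)\mid f_i(x)\le y\}\subset\mathbb{R}^n\times\mathbb{R}$. Let $K\subset\mathbb{R}^{n+1}$ be a nonempty, closed set containing a point $(x_*,y_* )$ with $y_*\le 0$ (i.e. $K$ extends into the closed negative half-space), and with $K\cap L_i=\emptyset$ for all $i\in I$. Let $f_{\min}(x)=\min\{f_i(x)\mid i\in I\}$; its epigraph is $L=\bigcup_{i\in I}L_i$, and $K\cap L=\emptyset$. For focal sets $K$ and a (disjoint) epigraph $M$, the upper/lower equidistant functions are $G^+(x)=\sup\{y : d((x,y),K)=d((x,y),M)\}$ and $G^-(x)=\inf\{y : d((x,y),K)=d((x,y),M)\}$; when the equidistant point on each vertical line is unique, the equidistant set is the graph of the equidistant function $G$ defined by $d((x,G(x)),K)=d((x,G(x)),M)$. Here $G_i^\pm$ are the upper/lower equidistant functions for $K$ and $L_i$, and $G_{\min}^\pm$ those for $K$ and $L$. It has been shown that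 $\min_i G_i^-(x)\le G_{\min}^-(x)\le G_{\min}^+(x)\le\min_i G_i^+(x)$ for all $x$. *)

From HB Require Import structures.
From mathcomp Require Import all_boot all_order all_algebra.
From mathcomp Require Import all_classical all_reals all_analysis.
Set Implicit Arguments. Unset Strict Implicit. Unset Printing Implicit Defensive.
Import Order.TTheory GRing.Theory Num.Theory.
Import numFieldNormedType.Exports.
Local Open Scope classical_set_scope.
Local Open Scope ring_scope.

(* Points of R^{n+1} = R^n x R are pairs (x, y) with x : 'rV[R]_n, y : R. *)

Definition eucl_dist {R : realType} {n : nat} (p q : 'rV[R]_n * R) : R :=
  Num.sqrt (\sum_(j < n) (p.1 ord0 j - q.1 ord0 j) ^+ 2 + (p.2 - q.2) ^+ 2).

Definition dist_set {R : realType} {n : nat}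
    (p : 'rV[R]_n * R) (A : set ('rV[R]_n * R)) : R :=
  inf [set eucl_dist p a | a in A].

Definition equidistant_set {R : realType} {n : nat}
    (A B : set ('rV[R]_n * R)) : set ('rV[R]_n * R) :=
  [set p | dist_set p A = dist_set p B].

Definition epigraph {R : realType} {n : nat} (f : 'rV[R]_n -> R)
    : set ('rV[R]_n * R) :=
  [set p | f p.1 <= p.2].

Definition Gplus {R : realType} {n : nat} (K M : set ('rV[R]_n * R))
    (x : 'rV[R]_n) : \bar R :=
  ereal_sup [set y%:E | y in [set y | equidistant_set K M (x, y)]].

Definition Gminus {R : realType} {n : nat} (K M : set ('rV[R]_n * R))
    (x : 'rV[R]_n) : \bar R :=
  ereal_inf [set y%:E | y in [set y | equidistant_set K M (x, y)]].

Definition is_equidistant_function {R : realType} {n : nat}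
    (K M : set ('rV[R]_n * R)) : Prop :=
  forall x : 'rV[R]_n, exists! y : R, equidistant_set K M (x, y).

From HB Require Import structures.
From mathcomp Require Import all_boot all_order all_algebra.
From mathcomp Require Import all_classical all_reals all_analysis.
From mathcomp Require Import ring lra.
Set Implicit Arguments.
Unset Strict Implicit.
Unset Printing Implicit Defensive.
Import Order.TTheory GRing.Theory Num.Theory.
Import numFieldNormedType.Exports.
Local Open Scope classical_set_scope.
Local Open Scope ring_scope.

(* Fix x and compare, along the vertical line through x, the distance to K
   with the distance to an epigraph L_i: phi_i y = d((x,y),K) - d((x,y),L_i).
   phi_i is continuous, it is <= 0 arbitrarily far down (the point of K at
   height <= 0 eventually beats the epigraph, which stays above the positive
   f_i) and >= 0 arbitrarily far up (inside L_i).  So if phi_i has a single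
   zero g_i, the intermediate value theorem makes it change sign from
   negative to positive exactly at g_i.  As d(., L) = min_i d(., L_i), the
   gap for L is max_i phi_i, which then changes sign exactly once, at
   min_i g_i. *)

Lemma exists_unique_set1 (T : Type) (P : T -> Prop) :
  (exists! y, P y) <-> exists g, [set y | P y] = [set g].
Proof.
split=> [[g [Pg uniq]]|[g Pg]].
  by exists g; apply/seteqP; split=> [y /uniq <-|_ ->].
have Pgg : P g by have : [set g] g by []; rewrite -Pg.
by exists g; split=> // y Py; have : [set g] y by rewrite -Pg.
Qed.

Lemma ereal_inf_eq_sup_set1 (R : realType) (S : set R) :
  ereal_inf [set y%:E | y in S] = ereal_sup [set y%:E | y in S] ->
  exists g, S = [set g].
Proof.
have [[s Ss] inf_sup|S0] := pselect (S !=set0); last first.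
  have -> : [set y%:E | y in S] = set0.
    by apply/seteqP; split=> // z [y Sy _]; apply: S0; exists y.
  by rewrite ereal_inf0 ereal_sup0.
have S_le y z : S y -> S z -> y <= z.
  move=> Sy Sz; rewrite -lee_fin.
  have y_le_sup : (y%:E <= ereal_sup [set y%:E | y in S])%E.
    by apply: ereal_sup_ubound; exists y.
  by apply: le_trans y_le_sup _; rewrite -inf_sup; apply: ereal_inf_lbound; exists z.
exists s; apply/seteqP; split=> [y Sy|_ ->] //.
by apply/le_anti; rewrite !S_le.
Qed.

Section RealFunctions.
Variable R : realType.
Implicit Types (phi : R -> R) (g : R).

Definition crosses_up_at phi g :=
  [/\ phi g = 0, forall y, y < g -> phi y < 0 & forall y, g < y -> 0 < phi y].

Lemma crosses_up_at_zero_set phi g :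
  crosses_up_at phi g -> [set y | phi y = 0] = [set g].
Proof.
case=> phig neg pos; apply/seteqP; split=> [y /= phiy|_ ->] //.
by case: (ltgtP y g) => [/neg|/pos|//]; rewrite phiy ltxx.
Qed.

Lemma crosses_up_at_le0 phi g y : crosses_up_at phi g -> y <= g -> phi y <= 0.
Proof.
by case=> phig neg _; rewrite le_eqVlt => /orP[/eqP->|/neg/ltW]; rewrite ?phig.
Qed.

Lemma crosses_up_at_of_zero_set phi g :
  continuous phi -> [set y | phi y = 0] = [set g] ->
  (forall B, exists2 Y, Y < B & phi Y <= 0) ->
  (forall B, exists2 Y, B < Y & 0 <= phi Y) ->
  crosses_up_at phi g.
Proof.
move=> phic zero_set low high.
have root y : phi y = 0 -> y = g by move=> phiy; have : [set g] y by rewrite -zero_set.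
have ivt a b : a <= b -> Num.min (phi a) (phi b) <= 0 <= Num.max (phi a) (phi b) ->
    exists2 c, a <= c <= b & c = g.
  move=> ab /(IVT ab (continuous_subspaceT phic))[c].
  by rewrite in_itv /= => cab /root; exists c.
split=> [|y yg|y gy]; first by have : [set g] g by []; rewrite -zero_set.
- rewrite ltNge; apply/negP => phiy; have [Y Yy phiY] := low y.
  have [|c /andP[_ cy] cg] := ivt Y y (ltW Yy).
    by rewrite ge_min le_max phiY phiy orbT.
  by move: yg; rewrite -cg ltNge cy.
- rewrite ltNge; apply/negP => phiy; have [Y yY phiY] := high y.
  have [|c /andP[yc _] cg] := ivt y Y (ltW yY).
    by rewrite ge_min le_max phiY phiy orbT.
  by move: gy; rewrite -cg ltNge yc.
Qed.

Lemma crosses_up_at_max (I : finType) (i0 : I) (phi : I -> R -> R) (Phi : R -> R)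
    (g : I -> R) :
  (forall i, crosses_up_at (phi i) (g i)) ->
  (forall y i, phi i y <= Phi y) -> (forall y, exists i, Phi y = phi i y) ->
  crosses_up_at Phi (g [arg min_(i < i0) g i]%O).
Proof.
move=> cross Phi_ge Phi_max; case: arg_minP => // j0 _ g_min.
have Phi_le0 y : y <= g j0 -> Phi y <= 0.
  move=> yg; have [i ->] := Phi_max y.
  by apply: (crosses_up_at_le0 (cross i)); apply: le_trans yg (g_min i isT).
have [phig _ pos] := cross j0.
split=> [|y yg|y gy].
- by apply/le_anti; rewrite Phi_le0 //= -phig Phi_ge.
- have [i ->] := Phi_max y; have [_ neg _] := cross i.
  by apply: neg; apply: lt_le_trans yg (g_min i isT).
- by apply: lt_le_trans (Phi_ge y j0); apply: pos.
Qed.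

Lemma lipschitz1_continuous (h : R -> R) :
  (forall a b, `|h a - h b| <= `|a - b|) -> continuous h.
Proof.
move=> h_lip y; apply/cvgrPdist_lt => e e_gt0.
apply/nbhs_ballP; exists e => //= t; rewrite /ball /= => yt.
exact: le_lt_trans (h_lip _ _) yt.
Qed.

End RealFunctions.

Section VerticalDistance.
Variables (R : realType) (n : nat).
Implicit Types (A K M : set ('rV[R]_n * R)) (p q : 'rV[R]_n * R) (x z : 'rV[R]_n).

Definition sqr_hdist x z : R := \sum_(j < n) (x ord0 j - z ord0 j) ^+ 2.

Lemma eucl_distE p q : eucl_dist p q = Num.sqrt (sqr_hdist p.1 q.1 + (p.2 - q.2) ^+ 2).
Proof. by []. Qed.

Lemma sqr_hdist_ge0 x z : 0 <= sqr_hdist x z.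
Proof. by apply: sumr_ge0 => j _; apply: sqr_ge0. Qed.

Lemma sqr_coord_le_hdist x z j : (x ord0 j - z ord0 j) ^+ 2 <= sqr_hdist x z.
Proof.
rewrite /sqr_hdist (bigD1 j) //= lerDl.
by apply: sumr_ge0 => k _; apply: sqr_ge0.
Qed.

Lemma eucl_dist_ge0 p q : 0 <= eucl_dist p q.
Proof. exact: sqrtr_ge0. Qed.

Lemma dist_set_ge0 p A : 0 <= dist_set p A.
Proof.
rewrite /dist_set; have [[a Aa]|A0] := pselect (A !=set0).
  apply: lb_le_inf; first by exists (eucl_dist p a), a.
  by move=> _ [b _ <-]; apply: eucl_dist_ge0.
have -> : [set eucl_dist p a | a in A] = set0.
  by apply/seteqP; split=> // d [b Ab _]; apply: A0; exists b.
by rewrite inf0.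
Qed.

Lemma dist_set_le p A a : A a -> dist_set p A <= eucl_dist p a.
Proof.
move=> Aa; apply: ge_inf; last by exists a.
by exists 0 => _ [b _ <-]; apply: eucl_dist_ge0.
Qed.

Lemma lb_le_dist_set p A m :
  A !=set0 -> (forall a, A a -> m <= eucl_dist p a) -> m <= dist_set p A.
Proof.
move=> [a Aa] lb; apply: lb_le_inf; first by exists (eucl_dist p a), a.
by move=> _ [b Ab <-]; apply: lb.
Qed.

Lemma dist_set_eq0 p A : A p -> dist_set p A = 0.
Proof.
move=> Ap; apply/le_anti; rewrite dist_set_ge0 andbT.
apply: le_trans (dist_set_le p Ap) _.
by rewrite eucl_distE /sqr_hdist big1 => [|j _]; rewrite !subrr expr0n ?add0r ?sqrtr0.
Qed.

Lemma eucl_dist_vshift x y y' q :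
  eucl_dist (x, y') q <= eucl_dist (x, y) q + `|y - y'|.
Proof.
rewrite !eucl_distE /=; set S := sqr_hdist x q.1; set t := y - q.2.
set s := Num.sqrt (S + t ^+ 2); set h := y - y'.
have S_ge0 : 0 <= S by apply: sqr_hdist_ge0.
have s_ge0 : 0 <= s by apply: sqrtr_ge0.
have ss : s ^+ 2 = S + t ^+ 2 by rewrite sqr_sqrtr // addr_ge0 ?sqr_ge0.
have ts : `|t| <= s by rewrite -sqrtr_sqr ler_wsqrtr // lerDr.
have th : - (t * h) <= s * `|h|.
  by apply: le_trans (ler_wpM2r (normr_ge0 h) ts); rewrite -normrM -normrN ler_norm.
rewrite -[leRHS]ger0_norm ?addr_ge0 // -sqrtr_sqr ler_wsqrtr //.
have -> : y' - q.2 = t - h by rewrite /t /h; ring.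
have hh : `|h| ^+ 2 = h ^+ 2 by rewrite real_normK ?num_real.
nra.
Qed.

Lemma continuous_dist_set_vert x A :
  A !=set0 -> continuous (fun y => dist_set (x, y) A).
Proof.
move=> A0; apply: lipschitz1_continuous.
suff shift y y' : dist_set (x, y') A <= dist_set (x, y) A + `|y - y'|.
  by move=> a b; have := shift a b; have := shift b a; rewrite distrC ler_norml; lra.
rewrite -lerBlDr; apply: lb_le_dist_set => // a Aa.
by rewrite lerBlDr; apply: le_trans (dist_set_le _ Aa) (eucl_dist_vshift _ _ _ _).
Qed.

Lemma dist_set_bigcup_le (I : Type) (A : I -> set ('rV[R]_n * R)) p i :
  A i !=set0 -> dist_set p (\bigcup_(k in [set: I]) A k) <= dist_set p (A i).
Proof.
by move=> Ai0; apply: lb_le_dist_set => // a Aia; apply: dist_set_le; exists i.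
Qed.

Lemma dist_set_bigcup_min (I : finType) (i0 : I) (A : I -> set ('rV[R]_n * R)) p :
  (forall i, A i !=set0) ->
  exists i, dist_set p (\bigcup_(k in [set: I]) A k) = dist_set p (A i).
Proof.
move=> A0; case: (@arg_minP _ R I i0 predT (fun i => dist_set p (A i))) => // j _ j_min.
exists j; apply/le_anti; rewrite dist_set_bigcup_le //=.
apply: lb_le_dist_set => [|a [k _ Aka]]; first by have [a Aa] := A0 i0; exists a, i0.
by apply: le_trans (j_min k isT) _; apply: dist_set_le.
Qed.

Lemma positive_lower_bound_on_cube (f : 'rV[R]_n -> R) x r :
  continuous f -> (forall z, 0 < f z) -> 0 <= r ->
  exists2 m, 0 < m & forall z, (forall j, `|x ord0 j - z ord0 j| <= r) -> m <= f z.
Proof.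
move=> fc fpos r_ge0.
pose side j := `[x ord0 j - r, x ord0 j + r]%classic.
pose cube := [set z : 'rV[R]_n | forall j, side j (z ord0 j)].
have cube_compact : compact cube.
  by apply: rV_compact => j; apply: segment_compact.
have cube0 : cube !=set0 by exists x => j /=; rewrite /side /= in_itv /=; apply/andP; split; lra.
have [c _ c_min] := EVT_min_rV cube0 cube_compact (continuous_subspaceT fc).
exists (f c) => // z zx; apply: c_min; rewrite inE => j; rewrite /side /= in_itv /=.
by move: (zx j); rewrite ler_norml => /andP[? ?]; apply/andP; split; lra.
Qed.

Lemma eucl_dist_below_epigraph (f : 'rV[R]_n -> R) x (xs : 'rV[R]_n) ys Y m a :
  0 < m -> (forall z, 0 < f z) ->
  (forall z, (forall j, `|x ord0 j - z ord0 j| <= Num.sqrt (sqr_hdist x xs)) -> m <= f z) ->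
  epigraph f a -> Y <= ys -> ys <= 0 -> sqr_hdist x xs / (2 * m) <= - Y ->
  eucl_dist (x, Y) (xs, ys) <= eucl_dist (x, Y) a.
Proof.
case: a => z w m_gt0 fpos f_ge_m; rewrite /epigraph /= => fzw Yys ys_le0.
rewrite ler_pdivrMr ?mulr_gt0 // !eucl_distE /= => DY; apply: ler_wsqrtr.
move: DY; set D := sqr_hdist x xs; set H := sqr_hdist x z => DY.
have H_ge0 : 0 <= H by apply: sqr_hdist_ge0.
have fz := fpos z.
(* a point of the epigraph horizontally closer than the point of K lies over
   the cube where f >= m, and is therefore at least 2 m |Y| farther vertically *)
have DH : D <= H + 2 * (- Y) * f z.
  have [|HD] := lerP D H; first by nra.
  have m_fz : m <= f z.
    apply: f_ge_m => j; rewrite -sqrtr_sqr ler_wsqrtr //.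
    by apply: le_trans (sqr_coord_le_hdist x z j) (ltW HD).
  have : - Y * m <= - Y * f z by rewrite ler_wpM2l // oppr_ge0; lra.
  lra.
have K_side : (Y - ys) ^+ 2 <= Y ^+ 2 by nra.
have epi_side : Y ^+ 2 + 2 * (- Y) * f z <= (Y - w) ^+ 2 by nra.
lra.
Qed.

Lemma dist_set_epigraph_far_below (f : 'rV[R]_n -> R) K x :
  continuous f -> (forall z, 0 < f z) -> (exists p, K p /\ p.2 <= 0) ->
  forall B, exists2 Y, Y < B & dist_set (x, Y) K <= dist_set (x, Y) (epigraph f).
Proof.
move=> fc fpos [[xs ys] [Kp /= ys_le0]] B.
have [m m_gt0 f_ge_m] :=
  positive_lower_bound_on_cube x fc fpos (sqrtr_ge0 (sqr_hdist x xs)).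
have q_ge0 : 0 <= sqr_hdist x xs / (2 * m) by rewrite divr_ge0 ?sqr_hdist_ge0 //; lra.
have B_le : - B <= `|B| by rewrite -normrN ler_norm.
have ys_le : - ys <= `|ys| by rewrite -normrN ler_norm.
have B_ge0 := normr_ge0 B; have ys_ge0 := normr_ge0 ys.
exists (- (`|B| + `|ys| + sqr_hdist x xs / (2 * m) + 1)); first by lra.
apply: le_trans (dist_set_le _ Kp) _.
apply: lb_le_dist_set => [|a epi_a]; first by exists (x, f x); rewrite /epigraph /=.
by apply: (eucl_dist_below_epigraph m_gt0 fpos f_ge_m epi_a) => //; lra.
Qed.

Definition equidistant_line K M x : set R := [set y | equidistant_set K M (x, y)].

Definition dist_gap K M x (y : R) : R := dist_set (x, y) K - dist_set (x, y) M.

Lemma equidistant_lineE K M x : equidistant_line K M x = [set y | dist_gap K M x y = 0].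
Proof.
rewrite /dist_gap; apply/seteqP; split=> y /=.
  by rewrite /equidistant_line /equidistant_set /= => ->; rewrite subrr.
by move/eqP; rewrite subr_eq0 => /eqP.
Qed.

Lemma crosses_up_at_dist_gap_epigraph (f : 'rV[R]_n -> R) K x g :
  continuous f -> (forall z, 0 < f z) -> (exists p, K p /\ p.2 <= 0) ->
  equidistant_line K (epigraph f) x = [set g] ->
  crosses_up_at (dist_gap K (epigraph f) x) g.
Proof.
move=> fc fpos Kp line_g.
have K0 : K !=set0 by case: Kp => p [Kp _]; exists p.
have epi0 : epigraph f !=set0 by exists (x, f x); rewrite /epigraph /=.
apply: crosses_up_at_of_zero_set.
- move=> y; have dK_cont := continuous_dist_set_vert (x := x) K0.
  have dL_cont := continuous_dist_set_vert (x := x) epi0.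
  exact: continuousB (dK_cont y) (dL_cont y).
- by rewrite -equidistant_lineE.
- move=> B; have [Y YB dY] := dist_set_epigraph_far_below x fc fpos Kp B.
  by exists Y; rewrite // /dist_gap subr_le0.
- move=> B; exists (Num.max B (f x) + 1); first by rewrite ltr_pwDr // le_max lexx.
  rewrite /dist_gap (dist_set_eq0 (A := epigraph f)) ?subr0 ?dist_set_ge0 // /epigraph /=.
  have : f x <= Num.max B (f x) by rewrite le_max lexx orbT.
  lra.
Qed.

Lemma equidistant_line_bigcup_set1 (I : finType) (i0 : I) (f : I -> 'rV[R]_n -> R)
    K x (g : I -> R) :
  (forall i z, 0 < f i z) -> (forall i, continuous (f i)) ->
  (exists p, K p /\ p.2 <= 0) ->
  (forall i, equidistant_line K (epigraph (f i)) x = [set g i]) ->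
  exists g0, equidistant_line K (\bigcup_(i in [set: I]) epigraph (f i)) x = [set g0].
Proof.
move=> fpos fc Kp line_g.
have epi0 i : epigraph (f i) !=set0 by exists (x, f i x); rewrite /epigraph /=.
exists (g [arg min_(i < i0) g i]%O).
rewrite equidistant_lineE; apply: crosses_up_at_zero_set.
have cross i := crosses_up_at_dist_gap_epigraph (fc i) (fpos i) Kp (line_g i).
apply: (crosses_up_at_max i0 cross) => y.
- by move=> i; apply: lerB => //; apply: dist_set_bigcup_le.
- by have [i eq_i] := dist_set_bigcup_min i0 (x, y) epi0; exists i; rewrite /dist_gap eq_i.
Qed.

End VerticalDistance.

Theorem corollary7 (R : realType) (n : nat) (I : finType)
    (f : I -> 'rV[R]_n -> R) (K : set ('rV[R]_n * R)) :
  (0 < #|I|)%N ->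
  (forall i x, 0 < f i x) ->
  (forall i, continuous (f i)) ->
  closed K ->
  (exists p, K p /\ p.2 <= 0) ->
  (forall i, K `&` epigraph (f i) = set0) ->
  let L := \bigcup_(i in [set: I]) epigraph (f i) in
  (forall x : 'rV[R]_n,
     (forall i, Gminus K (epigraph (f i)) x = Gplus K (epigraph (f i)) x) ->
     Gplus K L x = Gminus K L x) /\
  ((forall i, is_equidistant_function K (epigraph (f i))) ->
   is_equidistant_function K L).
Proof.
move=> /card_gt0P[i0 _] fpos fc _ Kp _ L.
have line_set1 x : (forall i, exists g, equidistant_line K (epigraph (f i)) x = [set g]) ->
    exists g, equidistant_line K L x = [set g].
  by move=> /choice[g line_g]; apply: (equidistant_line_bigcup_set1 i0 fpos fc Kp line_g).
split=> [x G_eq|equi_fun x].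
  have [g line_g] := line_set1 x (fun i => ereal_inf_eq_sup_set1 (G_eq i)).
  by rewrite /Gplus /Gminus -/(equidistant_line K L x) line_g image_set1 ereal_sup1 ereal_inf1.
apply/exists_unique_set1; apply: line_set1 => i.
exact/exists_unique_set1/equi_fun.
Qed.
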